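(* There exists a list $I=(x_1,\ldots,x_n)$ of items with all sizes $x_i\in(1/3,1]$ such that $$\mathbb{E}[\mathrm{BF}(I^\sigma)] > \frac{6}{5}\,\mathrm{OPT}(I),$$ where $\sigma$ is drawn uniformly at random from the set $\mathcal{S}_n$ of permutations of $[n]$.
   Context: Bin packing: given a list $I=(x_1,\ldots,x_n)$ of items with sizes in $(0,1]$, a packing assigns items to unit-capacity bins so that the total size of items in each bin is at most $1$. $\mathrm{OPT}(I)$ denotes the minimum number of bins in a feasible packing. The online algorithm Best Fit (BF) processes the items in the given order and packs the current item into the fullest bin (largest current load) into which it fits, opening a new bin if it fits into no existing bin; items are never moved. $\mathrm{BF}(I)$ denotes the number of bins Best Fit uses on list $I$. For $\sigma\in\mathcal{S}_n$, $I^\sigma=(x_{\sigma(1)},\ldots,x_{\sigma(n)})$. *)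

From mathcomp Require Import all_boot all_order all_algebra all_fingroup.
From mathcomp Require Import reals.
Set Implicit Arguments. Unset Strict Implicit. Unset Printing Implicit Defensive.
Import Order.TTheory GRing.Theory Num.Theory.
Local Open Scope ring_scope.

Section BinPacking.
Variable R : realFieldType.

(* A Best Fit state is the sequence of current bin loads (one entry per open bin). *)

(* Index of the fullest bin (largest load) into which x fits, if any
   (ties broken by smallest index; tie-breaking does not affect the multiset of loads). *)
Definition bf_choice (loads : seq R) (x : R) : option nat :=
  foldl (fun b i =>
           if loads`_i + x <= 1 then
             match b with
             | None => Some i
             | Some j => if loads`_j < loads`_i then Some i else Some j
             end
           else b) None (iota 0 (size loads)).

Definition bf_step (loads : seq R) (x : R) : seq R :=
  match bf_choice loads x with
  | None => rcons loads x
  | Some i => set_nth 0 loads i (loads`_i + x)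
  end.

Definition BF (I : seq R) : nat := size (foldl bf_step [::] I).

Definition packable (I : seq R) (m : nat) : bool :=
  [exists f : {ffun 'I_(size I) -> 'I_m},
     [forall j : 'I_m, \sum_(i < size I | f i == j) I`_i <= 1]].

(* OPT(I): least m such that I is packable into m bins (searched in 0..size I;
   when all items have size <= 1, size I bins always suffice). *)
Definition OPT (I : seq R) : nat :=
  head (size I) [seq m <- iota 0 (size I).+1 | packable I m].

Definition permute (I : seq R) (s : {perm 'I_(size I)}) : seq R :=
  [seq I`_(s i) | i <- enum 'I_(size I)].

Definition expected_BF (I : seq R) : R :=
  (\sum_(s : {perm 'I_(size I)}) (BF (permute s))%:R) / #|{perm 'I_(size I)}|%:R.

End BinPacking.

From mathcomp Require Import all_boot all_order all_algebra all_fingroup.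
From mathcomp Require Import reals.
From mathcomp Require Import lra.
Set Implicit Arguments. Unset Strict Implicit. Unset Printing Implicit Defensive.
Import Order.TTheory GRing.Theory Num.Theory.
Local Open Scope ring_scope.

(* Take the six items 6/16, 7/16, 8/16, 8/16, 9/16, 10/16, all in (1/3, 1].
   They fit into the three bins {6,10}, {7,9}, {8,8}, so OPT <= 3, whereas Best
   Fit uses 2600 bins in total over the 6! = 720 orders, i.e. 65/18 > 18/5 bins
   on average.  Scaling by 1/C preserves both "fits into the bin" and "is fuller
   than", so Best Fit on multiples of 1/C is exactly Best Fit on integer loads
   with capacity C, and the total of 2600 is obtained by evaluation. *)

Lemma map_set_nth (A B : Type) (f : A -> B) x0 (s : seq A) n y :
  map f (set_nth x0 s n y) = set_nth (f x0) (map f s) n (f y).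
Proof.
elim: s n => [|a s IH] [|n] //=; last by rewrite IH.
by elim: n => //= n ->.
Qed.

Lemma eq_foldl (A B : Type) (f g : B -> A -> B) :
  f =2 g -> foldl f =2 foldl g.
Proof. by move=> fg b s; elim: s b => //= a s IH b; rewrite fg IH. Qed.

Lemma big_perm_permutations (T : Type) (idx : T) (op : Monoid.com_law idx)
    n (G : seq nat -> T) :
  \big[op/idx]_(s : 'S_n) G [seq val (s i) | i <- enum 'I_n] =
  \big[op/idx]_(t <- permutations (iota 0 n)) G t.
Proof.
pose h (s : 'S_n) := [seq val (s i) | i <- enum 'I_n].
rewrite -(big_image _ _ h predT G); apply: perm_big.
have h_inj : injective h.
  move=> s t; rewrite /h (map_comp val s) (map_comp val t) => /(inj_map val_inj) st.
  apply/permP => i; have si_ti := (eq_in_map _ _ _).2 st i.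
  by apply: si_ti; rewrite mem_enum.
have h_perm s : perm_eq (h s) (iota 0 n).
  rewrite /h -val_enum_ord (map_comp val s); apply: perm_map.
  apply: uniq_perm; rewrite ?(map_inj_uniq (@perm_inj _ s)) ?enum_uniq //.
  by move=> x; rewrite mem_enum; apply/mapP; exists (s^-1 x)%g; rewrite ?mem_enum ?permKV.
have uniq_img : uniq (image h predT) by rewrite map_inj_uniq ?enum_uniq.
have sub : {subset image h predT <= permutations (iota 0 n)}.
  by move=> t /mapP [s _ ->]; rewrite mem_permutations h_perm.
have size_le : (size (permutations (iota 0 n)) <= size (image h predT))%N.
  by rewrite size_image size_permutations ?iota_uniq // size_iota card_Sn.
have [_ img_eq] := uniq_min_size uniq_img sub size_le.
by apply: uniq_perm; rewrite ?permutations_uniq.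
Qed.

Definition BF_total (R : realFieldType) (I : seq R) : nat :=
  (\sum_(t <- permutations (iota 0 (size I))) BF [seq I`_k | k <- t]%R)%N.

Lemma expected_BF_total (R : realFieldType) (I : seq R) :
  expected_BF I = (BF_total I)%:R / (size I)`!%:R.
Proof.
rewrite /expected_BF /BF_total card_Sn -natr_sum.
rewrite -(@big_perm_permutations _ _ _ _ (fun t => BF [seq I`_k | k <- t])).
congr (_%:R / _); apply: eq_bigr => s _; congr BF.
by rewrite /permute -map_comp.
Qed.

Lemma OPT_le (R : realFieldType) (I : seq R) m :
  packable I m -> (m <= size I)%N -> (OPT I <= m)%N.
Proof.
move=> packIm m_le; set s := [seq k <- iota 0 (size I).+1 | packable I k].
have m_in_s : m \in s by rewrite mem_filter packIm mem_iota.
have s_sorted : sorted leq s by apply: sorted_filter; [exact: leq_trans | exact: iota_sorted].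
rewrite /OPT -/s -(nth_index (size I) m_in_s) -nth0.
have idx_m : index m s \in [pred i | (i < size s)%N] by rewrite inE index_mem.
by apply: (sorted_leq_nth leq_trans leqnn) => //; rewrite inE (leq_ltn_trans _ idx_m).
Qed.

Section IntegerBestFit.
Local Open Scope nat_scope.
Variable C : nat.

Definition bf_choice_nat (loads : seq nat) (x : nat) : option nat :=
  foldl (fun b i =>
           if nth 0 loads i + x <= C then
             match b with
             | None => Some i
             | Some j => if nth 0 loads j < nth 0 loads i then Some i else Some j
             end
           else b) None (iota 0 (size loads)).

Definition bf_step_nat (loads : seq nat) (x : nat) : seq nat :=
  match bf_choice_nat loads x with
  | None => rcons loads x
  | Some i => set_nth 0 loads i (nth 0 loads i + x)
  end.

Definition BF_nat (I : seq nat) : nat := size (foldl bf_step_nat [::] I).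

End IntegerBestFit.

Section Scaling.
Variables (R : realFieldType) (C : nat).
Hypothesis C_gt0 : (0 < C)%N.

Definition frac (k : nat) : R := k%:R / C%:R.

Lemma frac0 : frac 0 = 0. Proof. by rewrite /frac mul0r. Qed.

Lemma fracD a b : frac (a + b) = frac a + frac b.
Proof. by rewrite /frac natrD mulrDl. Qed.

Lemma nth_frac (t : seq nat) k : (map frac t)`_k = frac (nth 0 t k).
Proof.
have [k_lt | k_ge] := ltnP k (size t); first by rewrite (nth_map 0%N).
by rewrite !nth_default ?size_map // frac0.
Qed.

Lemma frac_le1 a : (frac a <= 1) = (a <= C)%N.
Proof. by rewrite /frac ler_pdivrMr ?ltr0n // mul1r ler_nat. Qed.

Lemma fracD_le1 a b : (frac a + frac b <= 1) = (a + b <= C)%N.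
Proof. by rewrite -fracD frac_le1. Qed.

Lemma ltr_frac a b : (frac a < frac b) = (a < b)%N.
Proof. by rewrite /frac ltr_pM2r ?invr_gt0 ?ltr0n // ltr_nat. Qed.

Lemma bf_choice_frac (loads : seq nat) x :
  bf_choice (map frac loads) (frac x) = bf_choice_nat C loads x.
Proof.
rewrite /bf_choice /bf_choice_nat size_map; apply: eq_foldl => b i.
by rewrite !nth_frac fracD_le1; case: b => // j; rewrite !nth_frac ltr_frac.
Qed.

Lemma bf_step_frac (loads : seq nat) x :
  bf_step (map frac loads) (frac x) = map frac (bf_step_nat C loads x).
Proof.
rewrite /bf_step /bf_step_nat bf_choice_frac; case: bf_choice_nat => [i|].
  by rewrite map_set_nth frac0 fracD nth_frac.
by rewrite map_rcons.
Qed.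

Lemma BF_frac (t : seq nat) : BF (map frac t) = BF_nat C t.
Proof.
suff foldl_frac loads : foldl (@bf_step R) (map frac loads) (map frac t) =
                        map frac (foldl (bf_step_nat C) loads t).
  by rewrite /BF /BF_nat (foldl_frac [::]) size_map.
by elim: t loads => //= x t IH loads; rewrite bf_step_frac IH.
Qed.

Lemma BF_total_frac (t : seq nat) :
  BF_total (map frac t) =
  (\sum_(u <- permutations (iota 0 (size t))) BF_nat C [seq nth 0 t k | k <- u])%N.
Proof.
rewrite /BF_total size_map; apply: eq_bigr => u _.
rewrite -BF_frac -map_comp; congr BF; apply: eq_map => k.
by rewrite /= nth_frac.
Qed.

Lemma packable_frac (t bins : seq nat) m :
  size bins = size t -> all (fun b => b < m)%N bins ->
  all (fun j => \sum_(0 <= i < size t | nth 0 bins i == j) nth 0 t i <= C)%N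
      (iota 0 m) ->
  packable (map frac t) m.
Proof.
move=> size_bins /allP bins_lt /allP bin_loads.
have bin_lt (i : 'I_(size (map frac t))) : (nth 0 bins i < m)%N.
  by apply: bins_lt; rewrite mem_nth // size_bins -(size_map frac).
apply/existsP; exists [ffun i => Ordinal (bin_lt i)]; apply/forallP => j.
under eq_bigl do rewrite ffunE -val_eqE /=.
under eq_bigr do rewrite nth_frac.
rewrite -(big_morph frac fracD frac0) frac_le1.
rewrite -(big_mkord (fun i => nth 0 bins i == j)%N (fun i => nth 0 t i)) size_map.
by apply: bin_loads; rewrite mem_iota ltn_ord.
Qed.

Lemma frac_in_third_one k : (C < 3 * k)%N -> (k <= C)%N -> 3%:R^-1 < frac k <= 1.
Proof.
move=> C_lt k_le; rewrite frac_le1 k_le andbT /frac ltr_pdivlMr ?ltr0n //.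
have : C%:R < 3%:R * k%:R :> R by rewrite -natrM ltr_nat.
lra.
Qed.

End Scaling.

Definition sizes : seq nat := [:: 6; 7; 8; 8; 9; 10]%N.

Definition items (R : realFieldType) : seq R := map (frac R 16) sizes.

Lemma items_in_third_one (R : realFieldType) :
  all (fun x : R => 3%:R^-1 < x <= 1) (items R).
Proof.
apply/allP => _ /mapP [k k_in ->].
have /andP [] : ((16 < 3 * k) && (k <= 16))%N by move: k k_in; apply/allP.
exact: frac_in_third_one.
Qed.

Lemma OPT_items (R : realFieldType) : (OPT (items R) <= 3)%N.
Proof.
apply: OPT_le => //; apply: (@packable_frac R 16 isT sizes [:: 0; 1; 2; 2; 1; 0]%N) => //.
by rewrite unlock; vm_compute.
Qed.

Lemma BF_total_items (R : realFieldType) : BF_total (items R) = 2600%N.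
Proof. by rewrite BF_total_frac // unlock; vm_compute. Qed.

Theorem proposition3 (R : realType) :
  exists I : seq R,
    all (fun x => (3%:R)^-1 < x <= 1) I /\
    expected_BF I > (6%:R / 5%:R) * (OPT I)%:R.
Proof.
exists (items R); split; first exact: items_in_third_one.
rewrite expected_BF_total BF_total_items.
have : (OPT (items R))%:R <= 3%:R :> R by rewrite ler_nat OPT_items.
have -> : (size (items R))`! = 720%N by [].
lra.
Qed.
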